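(* Let $A$ be an $n\times n$ irreducible nonnegative matrix with largest eigenvalue $1$ and positive $w$ with $Aw=w$, $A^Tw=w$, and let $\tilde A=\frac12(A+A^T)$. Then for every nonempty $U\subsetneq[n]$ and every $b\in\mathbb R^{|U|}$, \[ \operatorname{cap}_{U,b}(\tilde A)\le\operatorname{cap}_{U,b}(A). \]
   Context: For an irreducible nonnegative $n\times n$ matrix $B$ with PF eigenvalue $1$ and a positive vector $w$ with $Bw=w$, $B^Tw=w$, set $L=I-B$. For nonempty $U\subsetneq[n]$ and $b\in\mathbb R^{|U|}$ (indexed by $U$), there is a unique $q\in\mathbb R^n$ with $q_i=w_ib_i$ for $i\in U$ and $(Lq)_i=0$ for $i\notin U$; the capacity is $\operatorname{cap}_{U,b}(B)=\langle q,Lq\rangle$. *)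

From HB Require Import structures.
From mathcomp Require Import all_boot all_order all_algebra.
From mathcomp.real_closed Require Import complex.
Set Implicit Arguments. Unset Strict Implicit. Unset Printing Implicit Defensive.
Import Order.TTheory GRing.Theory Num.Theory.
Local Open Scope ring_scope.

Definition nonneg_mx (R : numDomainType) n (A : 'M[R]_n) : Prop :=
  forall i j, 0 <= A i j.

(* irreducible (nonnegative) matrix: its digraph is strongly connected,
   i.e. for all i j there is k with (A^k)_{ij} > 0 *)
Definition irreducible_mx (R : numDomainType) n (A : 'M[R]_n) : Prop :=
  forall i j : 'I_n, exists k : nat, 0 < (A ^+ k) i j.

(* the largest (Perron-Frobenius) eigenvalue of A is 1: 1 is an eigenvalue
   and every complex eigenvalue has modulus at most 1 *)
Definition PF_eigenvalue_one (R : rcfType) n (A : 'M[R]_n) : Prop :=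
  root (char_poly A) 1 /\
  forall z : R[i], root (char_poly (map_mx (fun x : R => (x%:C)%C) A)) z ->
    `|z| <= 1.

Definition pos_vec (R : numDomainType) n (w : 'cV[R]_n) : Prop :=
  forall i, 0 < w i 0.

Definition cap_vec (R : numDomainType) n (B : 'M[R]_n) (w : 'cV[R]_n)
  (U : {set 'I_n}) (b : 'cV[R]_n) (q : 'cV[R]_n) : Prop :=
  (forall i, i \in U -> q i 0 = w i 0 * b i 0) /\
  (forall i, i \notin U -> ((1%:M - B) *m q) i 0 = 0).

Definition cap_value (R : numDomainType) n (B : 'M[R]_n) (q : 'cV[R]_n) : R :=
  \sum_i q i 0 * ((1%:M - B) *m q) i 0.

Definition sym_part (R : numFieldType) n (A : 'M[R]_n) : 'M[R]_n :=
  2^-1 *: (A + A^T).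

(** Existence: the boundary-value operator [q |-> (q on U, (I - B) q off U)]
    is injective. For [v] vanishing on [U] and [B]-harmonic off [U], the
    indices maximising [|v_i| / w_i] form a set closed under the support of
    [B] (since [B w = w], harmonicity at a maximiser is an averaging identity
    forcing equality at every neighbour); if the maximum were positive this
    set would avoid [U], which irreducibility rules out.

    Inequality: let [L = I - A] and [Ls = I - As] with [As = (A + A^T)/2].
    The quadratic form [<x, L x>] only sees the symmetric part of [L], so
    [cap(A) = <q, Ls q>], and [2 <x, L x>] is the Dirichlet form
    [sum_ij A_ij w_i w_j (x_i/w_i - x_j/w_j)^2 >= 0]. Since [Ls] is symmetric,
    [qs] is [Ls]-harmonic off [U] and [q - qs] vanishes on [U], the cross
    terms vanish: [<q, Ls q> = <qs, Ls qs> + <q - qs, Ls (q - qs)>]. *)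

From HB Require Import structures.
From mathcomp Require Import all_boot all_order all_algebra.
From mathcomp.real_closed Require Import complex.
From mathcomp Require Import ring.
Set Implicit Arguments. Unset Strict Implicit. Unset Printing Implicit Defensive.
Import Order.TTheory GRing.Theory Num.Theory.
Local Open Scope ring_scope.

Section Capacity.
Variables (R : realFieldType) (n : nat).
Implicit Types (A B L : 'M[R]_n) (u v w x q : 'cV[R]_n) (S U : {set 'I_n}).

Definition supp_closed B S := forall i j, i \in S -> B i j != 0 -> j \in S.

Lemma supp_closedX B S k i j :
  supp_closed B S -> i \in S -> (B ^+ k) i j != 0 -> j \in S.
Proof.
move=> closedS; elim: k j => [|k IHk] j iS.
  by rewrite expr0 mxE; have [<- // | _] := eqVneq i j; rewrite eqxx.
rewrite exprSr -mulmxE mxE; apply: contraTT => jNS; rewrite negbK; apply/eqP.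
apply: big1 => l _; have [lS | lNS] := boolP (l \in S).
  by rewrite (eqP (negbNE (contra (closedS l j lS) jNS))) mulr0.
by rewrite (eqP (negbNE (contra (IHk l iS) lNS))) mul0r.
Qed.

Lemma irreducible_closed_setT A S i :
  irreducible_mx A -> supp_closed A S -> i \in S -> S = setT.
Proof.
move=> irrA closedS iS; apply/setP => j; rewrite inE.
by have [k /lt0r_neq0] := irrA i j; exact: supp_closedX.
Qed.

Lemma irreducible_closed_avoid A B U S :
  irreducible_mx A -> U != set0 -> (forall i j, A i j != 0 -> B i j != 0) ->
  supp_closed B S -> S \subset ~: U -> S = set0.
Proof.
move=> irrA /set0Pn[u uU] suppAB closedS SnU.
apply/eqP; apply/set0Pn => -[i iS].
have closedAS : supp_closed A S by move=> k j kS /suppAB; exact: closedS.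
have := subsetP SnU u; rewrite (irreducible_closed_setT irrA closedAS iS).
by rewrite in_setT inE uU => /(_ isT).
Qed.

Section MaximumPrinciple.
Variables (B : 'M[R]_n) (w : 'cV[R]_n).
Hypotheses (B_ge0 : nonneg_mx B) (w_gt0 : pos_vec w) (Bw : B *m w = w).

Let ratio v i := `|v i 0| / w i 0.

Let ratio_ge0 v i : 0 <= ratio v i.
Proof. by rewrite divr_ge0 // ltW. Qed.

Lemma harmonic_max_spread v i j :
  ((1%:M - B) *m v) i 0 = 0 -> (forall k, ratio v k <= ratio v i) ->
  B i j != 0 -> ratio v j = ratio v i.
Proof.
move=> harm_i max_i Bij; set M := ratio v i.
have vi : v i 0 = \sum_k B i k * v k 0.
  by move/eqP: harm_i; rewrite mulmxBl mul1mx !mxE subr_eq0 => /eqP.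
pose F k := B i k * w k 0 * (M - ratio v k).
have F_ge0 k : 0 <= F k.
  by rewrite !mulr_ge0 ?subr_ge0 ?max_i ?B_ge0 // ltW.
have sumF : \sum_k F k = M * w i 0 - \sum_k B i k * `|v k 0|.
  rewrite -{1}Bw mxE mulr_sumr -sumrB; apply: eq_bigr => k _.
  by rewrite /F /ratio; field; exact: lt0r_neq0.
have sumF_le0 : \sum_k F k <= 0.
  rewrite sumF subr_le0 /M /ratio divfK ?lt0r_neq0 // vi.
  apply: le_trans (ler_norm_sum _ _ _) _; apply: ler_sum => k _.
  by rewrite normrM ger0_norm.
have /eqP : F j = 0.
  apply: (psumr_eq0P (P := xpredT)) => //.
  by apply/eqP; rewrite eq_le sumF_le0 sumr_ge0.
rewrite !mulf_eq0 (negbTE Bij) (gt_eqF (w_gt0 j)) subr_eq0 /=.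
by move/eqP.
Qed.

Lemma harmonic_eq0 U v :
  (forall S, supp_closed B S -> S \subset ~: U -> S = set0) ->
  (forall i, i \in U -> v i 0 = 0) ->
  (forall i, i \notin U -> ((1%:M - B) *m v) i 0 = 0) -> v = 0.
Proof.
move=> avoidU v_U harm_v.
apply/matrixP => i c; rewrite ord1 mxE.
have [imax _ max_imax] := arg_maxP (ratio v) (isT : xpredT i).
set M := ratio v imax.
suff M0 : M = 0.
  have : ratio v i == 0 by rewrite eq_le ratio_ge0 andbT -M0; exact: max_imax.
  by rewrite mulf_eq0 invr_eq0 (gt_eqF (w_gt0 i)) orbF normr_eq0 => /eqP.
apply/eqP; apply: contraT => M_neq0.
pose S := [set k | ratio v k == M].
have SnU : S \subset ~: U.
  apply/subsetP => k; rewrite !inE => /eqP rk; apply/negP => kU.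
  by move: M_neq0; rewrite -rk /ratio v_U // normr0 mul0r eqxx.
have closedS : supp_closed B S.
  move=> k j kS Bkj; rewrite inE; move: (kS); rewrite inE => /eqP rk.
  rewrite (harmonic_max_spread (harm_v k _)) ?rk //.
    by move: (subsetP SnU k kS); rewrite inE.
  by move=> l; exact: max_imax.
have : imax \in S by rewrite inE.
by rewrite (avoidU _ closedS SnU) inE.
Qed.
End MaximumPrinciple.

Definition dirichlet_mx B U : 'M[R]_n :=
  \matrix_(i, j) if i \in U then (i == j)%:R else (1%:M - B) i j.

Lemma dirichlet_mxE B U q i :
  (dirichlet_mx B U *m q) i 0 =
  if i \in U then q i 0 else ((1%:M - B) *m q) i 0.
Proof.
case: ifP => iU; last by rewrite !mxE; apply: eq_bigr => j _; rewrite mxE iU.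
by rewrite -[in RHS](mul1mx q) !mxE; apply: eq_bigr => j _; rewrite !mxE iU.
Qed.

Section DirichletProblem.
Variables (B : 'M[R]_n) (w : 'cV[R]_n) (U : {set 'I_n}).
Hypotheses (B_ge0 : nonneg_mx B) (w_gt0 : pos_vec w) (Bw : B *m w = w).
Hypothesis avoidU : forall S, supp_closed B S -> S \subset ~: U -> S = set0.

Lemma dirichlet_mx_unit : dirichlet_mx B U \in unitmx.
Proof.
rewrite -unitmx_tr unitmxE unitfE; apply/negP => /det0P[v v_neq0 vD].
have Dv : dirichlet_mx B U *m v^T = 0.
  by apply: trmx_inj; rewrite trmx_mul trmxK vD trmx0.
suff vT0 : v^T = 0 by rewrite -(trmxK v) vT0 trmx0 eqxx in v_neq0.
have Dv_i i : (dirichlet_mx B U *m v^T) i 0 = 0 by rewrite Dv mxE.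
by apply: (harmonic_eq0 B_ge0 w_gt0 Bw avoidU) => i iU; move: (Dv_i i);
  rewrite dirichlet_mxE; [rewrite iU | rewrite (negPf iU)].
Qed.

Lemma cap_vec_exists b : exists q, cap_vec B w U b q.
Proof.
pose q := invmx (dirichlet_mx B U) *m \col_i (if i \in U then w i 0 * b i 0 else 0).
have Dq i : (dirichlet_mx B U *m q) i 0 = if i \in U then w i 0 * b i 0 else 0.
  by rewrite mulmxA mulmxV ?dirichlet_mx_unit // mul1mx mxE.
by exists q; split=> i iU; have := Dq i;
  rewrite dirichlet_mxE; [rewrite iU | rewrite (negPf iU)].
Qed.

End DirichletProblem.

Definition qform L u v : R := (u^T *m L *m v) 0 0.

Lemma cap_valueE B q : cap_value B q = qform (1%:M - B) q q.
Proof.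
by rewrite /qform -mulmxA mxE; apply: eq_bigr => i _; rewrite [q^T 0 i]mxE.
Qed.

Lemma qform_trmx L u v : qform L^T u v = qform L v u.
Proof.
rewrite /qform; transitivity ((v^T *m L *m u)^T 0 0); last by rewrite mxE.
by rewrite !trmx_mul trmxK mulmxA.
Qed.

Lemma qformDl L u1 u2 v : qform L (u1 + u2) v = qform L u1 v + qform L u2 v.
Proof. by rewrite /qform linearD !mulmxDl mxE. Qed.

Lemma qformDr L u v1 v2 : qform L u (v1 + v2) = qform L u v1 + qform L u v2.
Proof. by rewrite /qform mulmxDr mxE. Qed.

Lemma qform_mxD L1 L2 u v : qform (L1 + L2) u v = qform L1 u v + qform L2 u v.
Proof. by rewrite /qform mulmxDr mulmxDl mxE. Qed.

Lemma qform_mxZ a L u v : qform (a *: L) u v = a * qform L u v.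
Proof. by rewrite /qform -scalemxAr -scalemxAl mxE. Qed.

Lemma qform_mxB L1 L2 u v : qform (L1 - L2) u v = qform L1 u v - qform L2 u v.
Proof. by rewrite /qform mulmxBr mulmxBl mxE [(- (_ : 'M_1)) 0 0]mxE. Qed.

Lemma qform_sym_part L u : qform (sym_part L) u u = qform L u u.
Proof. by rewrite qform_mxZ qform_mxD qform_trmx mulrC mulrDl -splitr. Qed.

Lemma cap_value_sym_part A x : cap_value (sym_part A) x = cap_value A x.
Proof. by rewrite !cap_valueE !qform_mxB qform_sym_part. Qed.

Lemma qform_eq0_supp L U u v :
  (forall i, i \in U -> u i 0 = 0) -> (forall i, i \notin U -> (L *m v) i 0 = 0) ->
  qform L u v = 0.
Proof.
move=> u_U Lv; rewrite /qform -mulmxA mxE big1 // => i _; rewrite mxE.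
by have [/u_U -> | /Lv ->] := boolP (i \in U); rewrite ?mul0r ?mulr0.
Qed.

Lemma qform_le_add L q d :
  L^T = L -> qform L d q = 0 -> 0 <= qform L d d ->
  qform L q q <= qform L (q + d) (q + d).
Proof.
move=> L_sym dq0 dd_ge0.
have qd0 : qform L q d = 0 by rewrite -L_sym qform_trmx.
by rewrite qformDl !qformDr qd0 dq0 addr0 add0r lerDl.
Qed.

Lemma sym_part_ge0 A : nonneg_mx A -> nonneg_mx (sym_part A).
Proof. by move=> A_ge0 i j; rewrite !mxE mulr_ge0 ?invr_ge0 ?addr_ge0 ?A_ge0. Qed.

Lemma sym_part_neq0 A i j : nonneg_mx A -> A i j != 0 -> sym_part A i j != 0.
Proof.
move=> A_ge0 Aij; rewrite !mxE mulf_neq0 ?invr_eq0 ?pnatr_eq0 //.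
by rewrite gt_eqF // ltr_wpDr ?A_ge0 // lt_def Aij A_ge0.
Qed.

Lemma sym_part_eigvec A w : A *m w = w -> A^T *m w = w -> sym_part A *m w = w.
Proof.
move=> Aw ATw; rewrite -scalemxAl mulmxDl Aw ATw -mulr2n -scaler_nat scalerA.
by rewrite mulVf ?scale1r ?pnatr_eq0.
Qed.

Lemma trmx_sym_part A : (sym_part A)^T = sym_part A.
Proof. by rewrite /sym_part linearZ /= linearD /= trmxK addrC. Qed.

Section DirichletForm.
Variables (A : 'M[R]_n) (w : 'cV[R]_n).
Hypotheses (w_gt0 : pos_vec w) (Aw : A *m w = w) (ATw : A^T *m w = w).

Lemma cap_value_dirichlet_form x :
  2 * cap_value A x =
  \sum_i \sum_j A i j * w i 0 * w j 0 * (x i 0 / w i 0 - x j 0 / w j 0) ^+ 2.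
Proof.
pose y i := x i 0 / w i 0.
have xE i : x i 0 = w i 0 * y i by rewrite mulrC divfK ?lt0r_neq0.
have rows B : B *m w = w ->
    \sum_i \sum_j B i j * w i 0 * w j 0 * y i ^+ 2 = \sum_i x i 0 ^+ 2.
  move=> Bw; apply: eq_bigr => i _.
  have := congr1 (fun v : 'cV_n => v i 0) Bw; rewrite /= mxE => Bw_i.
  rewrite xE; transitivity (w i 0 * (\sum_j B i j * w j 0) * y i ^+ 2).
    by rewrite mulr_sumr mulr_suml; apply: eq_bigr => j _; ring.
  by rewrite Bw_i; ring.
have cols : \sum_i \sum_j A i j * w i 0 * w j 0 * y j ^+ 2 = \sum_i x i 0 ^+ 2.
  rewrite exchange_big -(rows _ ATw); apply: eq_bigr => j _.
  by apply: eq_bigr => i _; rewrite mxE; ring.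
have cross : \sum_i \sum_j A i j * w i 0 * w j 0 * (y i * y j) =
             \sum_i x i 0 * (A *m x) i 0.
  apply: eq_bigr => i _; rewrite mxE mulr_sumr.
  by apply: eq_bigr => j _; rewrite !xE; ring.
have capE : cap_value A x = \sum_i x i 0 ^+ 2 - \sum_i x i 0 * (A *m x) i 0.
  by rewrite /cap_value -sumrB; apply: eq_bigr => i _; rewrite mulmxBl mul1mx !mxE; ring.
transitivity (\sum_i \sum_j A i j * w i 0 * w j 0 * y i ^+ 2
  + \sum_i \sum_j A i j * w i 0 * w j 0 * y j ^+ 2
  - 2 * \sum_i \sum_j A i j * w i 0 * w j 0 * (y i * y j)).
  by rewrite rows // cols cross capE; ring.
rewrite mulr_sumr -big_split -sumrB /=; apply: eq_bigr => i _.
by rewrite mulr_sumr -big_split -sumrB; apply: eq_bigr => j _; rewrite /y /=; ring.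
Qed.

Lemma cap_value_ge0 x : nonneg_mx A -> 0 <= cap_value A x.
Proof.
move=> A_ge0; rewrite -(pmulr_rge0 _ (ltr0Sn _ 1)) cap_value_dirichlet_form.
apply/sumr_ge0 => i _; apply/sumr_ge0 => j _.
by rewrite mulr_ge0 ?sqr_ge0 // !mulr_ge0 ?A_ge0 ?(ltW (w_gt0 i)) ?(ltW (w_gt0 j)).
Qed.

End DirichletForm.

End Capacity.

Theorem lemma5p23 (R : rcfType) (n : nat) (A : 'M[R]_n) (w : 'cV[R]_n) :
  nonneg_mx A -> irreducible_mx A -> PF_eigenvalue_one A ->
  pos_vec w -> A *m w = w -> A^T *m w = w ->
  forall (U : {set 'I_n}) (b : 'cV[R]_n),
    U != set0 -> U != setT ->
    (exists q, cap_vec A w U b q) /\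
    (exists q, cap_vec (sym_part A) w U b q) /\
    (forall q qs, cap_vec A w U b q -> cap_vec (sym_part A) w U b qs ->
       cap_value (sym_part A) qs <= cap_value A q).
Proof.
move=> A_ge0 irrA _ w_gt0 Aw ATw U b U_neq0 _.
have avoidU (B : 'M[R]_n) : (forall i j, A i j != 0 -> B i j != 0) ->
    forall S, supp_closed B S -> S \subset ~: U -> S = set0.
  by move=> suppAB S; exact: irreducible_closed_avoid irrA U_neq0 suppAB.
have As_ge0 := sym_part_ge0 A_ge0.
have As_w := sym_part_eigvec Aw ATw.
split; first exact: (cap_vec_exists A_ge0 w_gt0 Aw (avoidU A (fun i j => id))).
have avoidAs := avoidU _ (fun i j => sym_part_neq0 A_ge0).
split; first exact: (cap_vec_exists As_ge0 w_gt0 As_w avoidAs).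
move=> q qs [q_U _] [qs_U qs_harm].
have qE : q = qs + (q - qs) by rewrite addrC subrK.
rewrite -(cap_value_sym_part A q) !cap_valueE [in X in _ <= X]qE.
apply: qform_le_add.
- by rewrite linearB /= trmx1 trmx_sym_part.
- by apply: qform_eq0_supp qs_harm => i iU; rewrite !mxE q_U ?qs_U ?subrr.
- by rewrite -cap_valueE cap_value_sym_part (cap_value_ge0 w_gt0 Aw ATw).
Qed.
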